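(* For every integer $n\ge 1$, $\mathrm{TC}(\mathbb{S}^n)=4$, where $\mathbb{S}^n$ is the minimal finite model of the $n$-sphere.
   Context: Finite $T_0$ spaces are identified with finite posets (open sets are the down-closed sets). The non-Hausdorff join $A\circledast B$ is $A\sqcup B$ with the orders of $A$ and $B$ kept and $a\le b$ for all $a\in A,b\in B$. $\mathbb{S}^0$ is the two-point discrete space and inductively $\mathbb{S}^n=\mathbb{S}^{n-1}\circledast\mathbb{S}^0$ (a space with $2n+2$ points). Topological complexity is unreduced: $\mathrm{TC}(X)$ is the minimal $k$ such that $X\times X$ is covered by $k$ open sets each admitting a continuous section of $\pi:X^I\to X\times X$, $\gamma\mapsto(\gamma(0),\gamma(1))$. *)

From Stdlib Require Import Reals Rtopology.
Open Scope R_scope.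

(* A finite T0 space, presented as its specialization order. *)
Record poset : Type := Poset { carrier :> Type; le : carrier -> carrier -> Prop }.

Definition is_open (X : poset) (W : X -> Prop) : Prop :=
  forall x y : X, le X y x -> W x -> W y.

Definition nh_join (A B : poset) : poset :=
  Poset (A + B)%type (fun u v => match u, v with
    | inl a, inl a' => le A a a'
    | inr b, inr b' => le B b b'
    | inl _, inr _ => True
    | inr _, inl _ => False end).

Definition S0 : poset := Poset bool (fun a b => a = b).

Fixpoint sphere (n : nat) : poset :=
  match n with O => S0 | S m => nh_join (sphere m) S0 end.

Definition prod_open (X : poset) (O : X * X -> Prop) : Prop :=
  forall a b : X, O (a, b) -> exists A B : X -> Prop,
    is_open X A /\ is_open X B /\ A a /\ B b /\
    forall x y, A x -> B y -> O (x, y).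

Definition sub_open (X : poset) (U S : X * X -> Prop) : Prop :=
  exists O, prod_open X O /\ forall p, U p -> (S p <-> O p).

(* continuity of a path gamma : [0,1] -> X (values outside [0,1] ignored) *)
Definition path_continuous (X : poset) (g : R -> X) : Prop :=
  forall W : X -> Prop, is_open X W ->
  forall t, 0 <= t <= 1 -> W (g t) ->
  exists eps, 0 < eps /\
    forall s, 0 <= s <= 1 -> Rabs (s - t) < eps -> W (g s).

(* U admits a continuous section of pi : X^I -> X × X, X^I with the
   compact-open topology; continuity of s : U -> X^I is tested on the
   subbasic opens {gamma | gamma(K) ⊆ W}, K ⊆ [0,1] compact, W open. *)
Definition has_section (X : poset) (U : X * X -> Prop) : Prop :=
  exists s : X * X -> R -> X,
    (forall p, U p -> path_continuous X (s p) /\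
                      s p 0 = fst p /\ s p 1 = snd p) /\
    (forall (K : R -> Prop) (W : X -> Prop),
        compact K -> (forall t, K t -> 0 <= t <= 1) -> is_open X W ->
        sub_open X U (fun p => forall t, K t -> W (s p t))).

Definition motion_cover (X : poset) (k : nat) : Prop :=
  exists U : nat -> X * X -> Prop,
    (forall i, (i < k)%nat -> prod_open X (U i) /\ has_section X (U i)) /\
    (forall p, exists i, (i < k)%nat /\ U i p).

(* unreduced topological complexity TC(X) = k *)
Definition TC_eq (X : poset) (k : nat) : Prop :=
  motion_cover X k /\ forall m, motion_cover X m -> (k <= m)%nat.

(* The maximal points of S^(m+1) = S^m ⊛ S^0 are the two
   points [top b] of the S^0 factor, and every point lies below one of them.
   The down-set of a pair of maximal points (top b1, top b2) is open in the
   product, and it carries the section sending (x, y) to the step path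
   x -> top b1 -> c -> top b2 -> y, where c is any point of S^m (c lies below
   both maximal points).  The four such down-sets cover S^(m+1) × S^(m+1).

   Let U be an open set with a section s.  Continuity of s for
   the compact-open topology makes s monotone in the endpoints pointwise in
   time.  If U contained two distinct pairs of maximal points, say with
   different first coordinates, it would contain every (y, c), and
   G t y := s (y, c) t would be a homotopy of monotone self-maps from the
   identity to the constant map c.  But S^n is rigid: a monotone map
   comparable with the identity is the identity (S^n has no beat points), so
   by a connectedness argument on [0,1] every G t is the identity, which is
   absurd.  Hence each open set with a section contains at most one of the
   four pairs of maximal points, and at least four sets are needed. *)

From Pilot Require Import Defs.
From Stdlib Require Import Reals Rtopology Lia Lra List Classical.
Open Scope R_scope.

Local Notation "x ⊑ y" := (Defs.le _ x y) (at level 70).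

(* A map of finite spaces is continuous iff it is monotone. *)
Definition monotone (X : poset) (f : X -> X) : Prop :=
  forall x y : X, x ⊑ y -> f x ⊑ f y.

Definition locally_below (X : poset) (g : R -> X) : Prop :=
  forall t, 0 <= t <= 1 -> exists eps, 0 < eps /\
    forall s, 0 <= s <= 1 -> Rabs (s - t) < eps -> g s ⊑ g t.

(** * Analysis on the unit interval *)

(* A property holding at 0 and locally constant on [0,1] holds on [0,1]:
   the supremum of the initial segments where it holds is 1. *)
Lemma locally_constant_from_zero (Q : R -> Prop) :
  (forall t, 0 <= t <= 1 -> exists eps, 0 < eps /\
     forall s, 0 <= s <= 1 -> Rabs (s - t) < eps -> (Q s <-> Q t)) ->
  Q 0 -> forall t, 0 <= t <= 1 -> Q t.
Proof.
  intros Hloc H0.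
  set (E := fun x => 0 <= x <= 1 /\ forall s, 0 <= s <= x -> Q s).
  assert (HE0 : E 0).
  { split; [lra|]. intros s Hs. replace s with 0 by lra. exact H0. }
  assert (Hbound : bound E) by (exists 1; intros x [Hx _]; lra).
  destruct (completeness E Hbound (ex_intro _ 0 HE0)) as [tau [Hub Hlub]].
  assert (Htau : 0 <= tau <= 1).
  { split; [apply Hub, HE0 | apply Hlub; intros x [Hx _]; lra]. }
  destruct (Hloc tau Htau) as [eps [Heps Hnear]].
  assert (Happrox : exists x, E x /\ tau - eps < x).
  { apply NNPP; intro Hno.
    assert (tau <= tau - eps); [|lra].
    apply Hlub; intros x Ex. apply Rnot_lt_le; intro Hlt. apply Hno; eauto. }
  destruct Happrox as [x [[Hx HQx] Hxlt]].
  assert (Hxtau : x <= tau) by (apply Hub; split; auto).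
  assert (Qtau : Q tau) by (apply (Hnear x); [lra | apply Rabs_def1; lra | apply HQx; lra]).
  set (z := Rmin (tau + eps / 2) 1).
  assert (Hz : tau < z \/ z = 1).
  { unfold z, Rmin; destruct Rle_dec; [left; lra | right; reflexivity]. }
  assert (Hz1 : z <= 1) by apply Rmin_r.
  assert (Hzeps : z <= tau + eps / 2) by apply Rmin_l.
  assert (Ez : E z).
  { split; [lra|]. intros s Hs. destruct (Rle_dec s x) as [Hsx|Hsx].
    - apply HQx; lra.
    - apply (Hnear s); [lra | apply Rabs_def1; lra | exact Qtau]. }
  assert (z <= tau) by (apply Hub, Ez).
  destruct Hz as [Hz|Hz]; [lra|].
  intros t Ht. apply (proj2 Ez). lra.
Qed.

Lemma locally_constant_iff_zero (Q : R -> Prop) :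
  (forall t, 0 <= t <= 1 -> exists eps, 0 < eps /\
     forall s, 0 <= s <= 1 -> Rabs (s - t) < eps -> (Q s <-> Q t)) ->
  forall t, 0 <= t <= 1 -> (Q t <-> Q 0).
Proof.
  intros Hloc. apply (locally_constant_from_zero (fun t => Q t <-> Q 0)); [|tauto].
  intros t Ht. destruct (Hloc t Ht) as [eps [Heps Hnear]].
  exists eps; split; auto. intros s Hs Hst. specialize (Hnear s Hs Hst). tauto.
Qed.

Lemma common_radius (A : Type) (P : A -> R -> Prop) :
  (forall a e e', 0 < e' <= e -> P a e -> P a e') ->
  forall l : list A, (forall a, In a l -> exists e, 0 < e /\ P a e) ->
  exists e, 0 < e /\ forall a, In a l -> P a e.
Proof.
  intros Hshrink l; induction l as [|a l IH]; intros H.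
  - exists 1; split; [lra | intros a []].
  - destruct (H a (or_introl eq_refl)) as [e1 [He1 P1]].
    destruct IH as [e2 [He2 P2]]; [intros b Hb; apply H; right; exact Hb|].
    assert (Hmin : 0 < Rmin e1 e2) by (apply Rmin_glb_lt; assumption).
    exists (Rmin e1 e2); split; [exact Hmin|]. intros b [<-|Hb].
    + apply (Hshrink _ e1); [split; [exact Hmin | apply Rmin_l] | exact P1].
    + apply (Hshrink _ e2); [split; [exact Hmin | apply Rmin_r] | exact (P2 b Hb)].
Qed.

(** * Sections over finite preorders *)

Section Sections.
Variable X : poset.
Hypothesis X_refl : forall x : X, x ⊑ x.
Hypothesis X_trans : forall x y z : X, x ⊑ y -> y ⊑ z -> x ⊑ z.

Lemma prod_open_down_closed (O : X * X -> Prop) (a b x y : X) :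
  prod_open X O -> O (a, b) -> x ⊑ a -> y ⊑ b -> O (x, y).
Proof.
  intros HO Hab Hx Hy.
  destruct (HO a b Hab) as [A [B [HA [HB [Ha [Hb HAB]]]]]].
  apply HAB; [apply (HA a x) | apply (HB b y)]; assumption.
Qed.

Lemma down_set_open (a : X) : is_open X (fun x => x ⊑ a).
Proof. intros x y Hyx Hx. eauto. Qed.

(* Continuity of a path only needs to be tested on principal down-sets. *)
Lemma path_continuous_locally_below (g : R -> X) :
  path_continuous X g <-> locally_below X g.
Proof.
  split.
  - intros Hg t Ht. apply (Hg (fun z => z ⊑ g t)); auto using down_set_open.
  - intros Hg W HW t Ht HWt. destruct (Hg t Ht) as [eps [Heps Hnear]].
    exists eps; split; [exact Heps|]. intros s Hs Hst. exact (HW _ _ (Hnear s Hs Hst) HWt).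
Qed.

(* The paths of a continuous section over an open set are monotone in the
   endpoints at each time: test continuity on K = {t}, W = down-set of s(a,b)(t). *)
Lemma section_monotone (U : X * X -> Prop) (s : X * X -> R -> X) :
  prod_open X U ->
  (forall K W, compact K -> (forall t, K t -> 0 <= t <= 1) -> is_open X W ->
     sub_open X U (fun p => forall t, K t -> W (s p t))) ->
  forall a b x y t, 0 <= t <= 1 -> U (a, b) -> x ⊑ a -> y ⊑ b ->
  s (x, y) t ⊑ s (a, b) t.
Proof.
  intros HU Hcont a b x y t Ht Hab Hx Hy.
  destruct (Hcont (fun c => t <= c <= t) (fun z => z ⊑ s (a, b) t))
    as [O [HO HUO]]; [apply compact_P3 | intros c Hc; lra | apply down_set_open |].
  assert (Oab : O (a, b)).
  { apply HUO; [exact Hab|]. intros c Hc. replace c with t by lra. apply X_refl. }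
  assert (Uxy : U (x, y)) by (eapply prod_open_down_closed; eauto).
  assert (Oxy : O (x, y)) by (eapply prod_open_down_closed; eauto).
  apply (proj2 (HUO (x, y) Uxy) Oxy t). lra.
Qed.

(* Conversely, a family of continuous paths over an open set which is
   monotone in the endpoints is a continuous section: the preimage of a
   subbasic open set is down-closed. *)
Lemma monotone_paths_section (U : X * X -> Prop) (s : X * X -> R -> X) :
  prod_open X U ->
  (forall p, U p -> path_continuous X (s p) /\ s p 0 = fst p /\ s p 1 = snd p) ->
  (forall a b x y t, U (a, b) -> x ⊑ a -> y ⊑ b -> s (x, y) t ⊑ s (a, b) t) ->
  has_section X U.
Proof.
  intros HU Hpaths Hmono. exists s. split; [exact Hpaths|]. intros K W _ _ HW.
  exists (fun p => U p /\ forall t, K t -> W (s p t)). split; [|tauto].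
  intros a b [Uab HK]. exists (fun x => x ⊑ a), (fun y => y ⊑ b).
  do 4 (split; [auto using down_set_open|]). intros x y Hx Hy. split.
  - exact (prod_open_down_closed U a b x y HU Uab Hx Hy).
  - intros t Kt. exact (HW _ _ (Hmono a b x y t Uab Hx Hy) (HK t Kt)).
Qed.

End Sections.

(** * Order structure of the spheres *)

Lemma sphere_refl n (x : sphere n) : x ⊑ x.
Proof.
  induction n; simpl in *; [reflexivity|].
  destruct x as [a|b]; simpl; [apply IHn | reflexivity].
Qed.

Lemma sphere_trans n (x y z : sphere n) : x ⊑ y -> y ⊑ z -> x ⊑ z.
Proof.
  induction n; simpl in *; [congruence|].
  destruct x, y, z; simpl; try tauto; eauto; congruence.
Qed.

Lemma sphere_no_greatest n (m : sphere n) : ~ (forall a : sphere n, a ⊑ m).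
Proof.
  destruct n; simpl; intros H.
  - pose proof (H true); pose proof (H false); congruence.
  - destruct m as [a|b]; [exact (H (inr true)) |].
    specialize (H (inr (negb b))); simpl in H; destruct b; discriminate.
Qed.

Lemma sphere_two_points n (c : sphere n) : ~ (forall y : sphere n, y = c).
Proof.
  intros H. apply (sphere_no_greatest n c). intros a. rewrite (H a). apply sphere_refl.
Qed.

Definition left_part {A B : Type} (d : A) (v : A + B) : A :=
  match v with inl a => a | inr _ => d end.

Lemma left_part_below (A B : poset) (a : A) (v : nh_join A B) :
  v ⊑ inl a -> v = inl (left_part a v).
Proof. destruct v; simpl; [reflexivity | intros []]. Qed.

Lemma left_part_not_right (A B : poset) (a : A) (v : nh_join A B) :
  (forall b, v <> inr b) -> v = inl (left_part a v).
Proof. destruct v as [c|c]; intros H; [reflexivity | destruct (H c eq_refl)]. Qed.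

(* By induction, f maps S^(n-1) into itself, hence is the identity
   there, and then a top point cannot drop since S^(n-1) has no greatest point. *)
Lemma sphere_rigid_below n (f : sphere n -> sphere n) :
  monotone (sphere n) f -> (forall x, f x ⊑ x) -> forall x, f x = x.
Proof.
  revert f; induction n as [|n IH]; intros f Hmono Hbelow x; [exact (Hbelow x)|].
  set (g := fun a : sphere n => left_part a (f (inl a))).
  assert (Hg : forall a : sphere n, f (inl a) = inl (g a)).
  { intros a. apply left_part_below, Hbelow. }
  assert (Hgid : forall a, g a = a).
  { apply IH.
    - intros a a' H. generalize (Hmono (inl a) (inl a') H). rewrite !Hg. exact (fun h => h).
    - intros a. generalize (Hbelow (inl a)). rewrite Hg. exact (fun h => h). }
  destruct x as [a|b]; [rewrite Hg, Hgid; reflexivity|].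
  generalize (Hbelow (inr b)). destruct (f (inr b)) as [c|c] eqn:E; simpl.
  - exfalso. apply (sphere_no_greatest n c). intros a.
    generalize (Hmono (inl a) (inr b) I). rewrite E, Hg, Hgid. exact (fun h => h).
  - intros ->. exact E.
Qed.

(* Top points are fixed, so f maps S^(n-1) into itself (a point of
   S^(n-1) is below both tops), and induction applies. *)
Lemma sphere_rigid_above n (f : sphere n -> sphere n) :
  monotone (sphere n) f -> (forall x, x ⊑ f x) -> forall x, f x = x.
Proof.
  revert f; induction n as [|n IH]; intros f Hmono Habove x; [symmetry; exact (Habove x)|].
  assert (Htop : forall b, f (inr b) = inr b).
  { intros b. generalize (Habove (inr b)). destruct (f (inr b)); simpl; [tauto | intros <-; reflexivity]. }
  set (g := fun a : sphere n => left_part a (f (inl a))).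
  assert (Hg : forall a : sphere n, f (inl a) = inl (g a)).
  { intros a. unfold g. apply left_part_not_right. intros c E.
    generalize (Hmono (inl a) (inr (negb c)) I). rewrite E, Htop. simpl.
    destruct c; discriminate. }
  assert (Hgid : forall a, g a = a).
  { apply IH.
    - intros a a' H. generalize (Hmono (inl a) (inl a') H). rewrite !Hg. exact (fun h => h).
    - intros a. generalize (Habove (inl a)). rewrite Hg. exact (fun h => h). }
  destruct x as [a|b]; [rewrite Hg, Hgid; reflexivity | apply Htop].
Qed.

Fixpoint sphere_points (n : nat) : list (sphere n) :=
  match n return list (sphere n) with
  | O => true :: false :: nil
  | S m => map inl (sphere_points m) ++ inr true :: inr false :: nil
  end.

Lemma sphere_points_complete n (x : sphere n) : In x (sphere_points n).
Proof.
  induction n; simpl.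
  - destruct x; simpl; auto.
  - destruct x as [a|b]; apply in_or_app; [left; apply in_map, IHn | right; destruct b; simpl; auto].
Qed.

(* Homotopy rigidity: along a continuous family of monotone self-maps of S^n,
   being the identity is locally constant (by rigidity, since nearby maps are
   below the current one and S^n is finite), hence constant on [0,1]. *)
Lemma sphere_homotopy_rigid n (G : R -> sphere n -> sphere n) :
  (forall t, 0 <= t <= 1 -> monotone (sphere n) (G t)) ->
  (forall y, locally_below (sphere n) (fun t => G t y)) ->
  forall t, 0 <= t <= 1 -> ((forall y, G t y = y) <-> (forall y, G 0 y = y)).
Proof.
  intros Hmono Hcont. apply (locally_constant_iff_zero (fun t => forall y, G t y = y)).
  intros t Ht.
  destruct (common_radius _ (fun y e => forall s, 0 <= s <= 1 -> Rabs (s - t) < e -> G s y ⊑ G t y))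
    with (l := sphere_points n) as [e [He Hnear]].
  - intros a e e' He' Ha s Hs Hst. apply Ha; auto. lra.
  - intros a _. apply (Hcont a t Ht).
  - exists e; split; [exact He|]. intros s Hs Hst.
    assert (Hle : forall y, G s y ⊑ G t y) by (intros y; apply Hnear; auto using sphere_points_complete).
    split; intros Hid.
    + apply sphere_rigid_above; [apply Hmono; exact Ht|]. intros y. rewrite <- (Hid y) at 1. apply Hle.
    + apply sphere_rigid_below; [apply Hmono; exact Hs|]. intros y. rewrite <- (Hid y) at 2. apply Hle.
Qed.

Definition top m (b : bool) : sphere (S m) := inr b.

Fixpoint basepoint (n : nat) : sphere n :=
  match n return sphere n with O => true | S m => inl (basepoint m) end.

(* A point of the S^m factor: it lies below every maximal point. *)
Definition bottom m : sphere (S m) := inl (basepoint m).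

Lemma below_some_top m (x : sphere (S m)) : exists b, x ⊑ top m b.
Proof. destruct x as [a|b]; [exists true; exact I | exists b; reflexivity]. Qed.

Lemma below_either_top m (b b' : bool) (y : sphere (S m)) :
  b <> b' -> y ⊑ top m b \/ y ⊑ top m b'.
Proof.
  intros Hbb'. destruct y as [a|c]; [left; exact I|]. simpl.
  destruct b, b', c; auto; congruence.
Qed.

(** * Lower bound *)

Lemma section_family n (U : sphere n * sphere n -> Prop) (s : sphere n * sphere n -> R -> sphere n)
  (emb : sphere n -> sphere n * sphere n) :
  prod_open (sphere n) U ->
  (forall p, U p -> path_continuous (sphere n) (s p) /\ s p 0 = fst p /\ s p 1 = snd p) ->
  (forall K W, compact K -> (forall t, K t -> 0 <= t <= 1) -> is_open (sphere n) W ->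
     sub_open (sphere n) U (fun p => forall t, K t -> W (s p t))) ->
  (forall y, U (emb y)) ->
  (forall y y', y ⊑ y' -> fst (emb y) ⊑ fst (emb y') /\ snd (emb y) ⊑ snd (emb y')) ->
  forall t, 0 <= t <= 1 -> ((forall y, s (emb y) t = y) <-> (forall y, s (emb y) 0 = y)).
Proof.
  intros HU Hpaths Hcont HUemb Hemb.
  apply (sphere_homotopy_rigid n (fun t y => s (emb y) t)).
  - intros t Ht y y' Hyy'. destruct (Hemb y y' Hyy') as [H1 H2].
    rewrite (surjective_pairing (emb y)), (surjective_pairing (emb y')).
    apply (section_monotone (sphere n) (sphere_refl n) (sphere_trans n) U s HU Hcont);
      [exact Ht | rewrite <- surjective_pairing; apply HUemb | exact H1 | exact H2].
  - intros y. apply (path_continuous_locally_below (sphere n) (sphere_refl n) (sphere_trans n)).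
    apply (Hpaths _ (HUemb y)).
Qed.

(* An open set with a section on S^n cannot contain a whole row {(y, c)} or a
   whole column {(c, y)}: that would contract S^n to c within S^n. *)
Lemma no_section_on_row_or_column n (U : sphere n * sphere n -> Prop) (c : sphere n) :
  prod_open (sphere n) U -> has_section (sphere n) U ->
  (forall y, U (y, c)) \/ (forall y, U (c, y)) -> False.
Proof.
  intros HU [s [Hpaths Hcont]] [Hrow|Hcol].
  - destruct (section_family n U s (fun y => (y, c)) HU Hpaths Hcont Hrow) with (t := 1)
      as [_ Hid1]; [intros y y' H; split; [exact H | apply sphere_refl] | lra |].
    apply (sphere_two_points n c). intros y.
    rewrite <- (Hid1 (fun y => proj1 (proj2 (Hpaths _ (Hrow y)))) y).
    exact (proj2 (proj2 (Hpaths _ (Hrow y)))).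
  - destruct (section_family n U s (fun y => (c, y)) HU Hpaths Hcont Hcol) with (t := 1)
      as [Hid0 _]; [intros y y' H; split; [apply sphere_refl | exact H] | lra |].
    apply (sphere_two_points n c). intros y.
    rewrite <- (Hid0 (fun y => proj2 (proj2 (Hpaths _ (Hcol y)))) y).
    exact (proj1 (proj2 (Hpaths _ (Hcol y)))).
Qed.

(* An open set with a section contains at most one pair of maximal points:
   two distinct pairs would force a whole row or column into it. *)
Lemma at_most_one_top_pair m (U : sphere (S m) * sphere (S m) -> Prop) (b1 b2 b1' b2' : bool) :
  prod_open (sphere (S m)) U -> has_section (sphere (S m)) U ->
  U (top m b1, top m b2) -> U (top m b1', top m b2') -> b1 = b1' /\ b2 = b2'.
Proof.
  intros HU Hsec H1 H2.
  assert (Hdown : forall x y, (x ⊑ top m b1 /\ y ⊑ top m b2) \/ (x ⊑ top m b1' /\ y ⊑ top m b2') ->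
            U (x, y)).
  { intros x y [[Hx Hy]|[Hx Hy]];
      [apply (prod_open_down_closed _ U _ _ _ _ HU H1) | apply (prod_open_down_closed _ U _ _ _ _ HU H2)];
      assumption. }
  destruct (Bool.bool_dec b1 b1') as [E1|E1]; [destruct (Bool.bool_dec b2 b2') as [E2|E2]; [auto|] |];
    exfalso; apply (no_section_on_row_or_column (S m) U (bottom m) HU Hsec).
  - right; intros y. apply Hdown.
    destruct (below_either_top m b2 b2' y E2); [left | right]; split; solve [assumption | exact I].
  - left; intros y. apply Hdown.
    destruct (below_either_top m b1 b1' y E1); [left | right]; split; solve [assumption | exact I].
Qed.

Lemma motion_cover_ge_4 m k : motion_cover (sphere (S m)) k -> (4 <= k)%nat.
Proof.
  intros [U [HU Hcov]].
  assert (Hdistinct : forall i j b1 b2 b1' b2', (j < k)%nat ->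
    U i (top m b1, top m b2) -> U j (top m b1', top m b2') -> b1 <> b1' \/ b2 <> b2' -> i <> j).
  { intros i j b1 b2 b1' b2' Hj Hi Hj' Hd ->. destruct (HU j Hj) as [Ho Hs].
    destruct (at_most_one_top_pair m (U j) _ _ _ _ Ho Hs Hi Hj'); tauto. }
  destruct (Hcov (top m true, top m true)) as [i1 [Hi1 U1]].
  destruct (Hcov (top m true, top m false)) as [i2 [Hi2 U2]].
  destruct (Hcov (top m false, top m true)) as [i3 [Hi3 U3]].
  destruct (Hcov (top m false, top m false)) as [i4 [Hi4 U4]].
  assert (i1 <> i2) by (apply (Hdistinct _ _ _ _ _ _ Hi2 U1 U2); right; discriminate).
  assert (i1 <> i3) by (apply (Hdistinct _ _ _ _ _ _ Hi3 U1 U3); left; discriminate).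
  assert (i1 <> i4) by (apply (Hdistinct _ _ _ _ _ _ Hi4 U1 U4); left; discriminate).
  assert (i2 <> i3) by (apply (Hdistinct _ _ _ _ _ _ Hi3 U2 U3); left; discriminate).
  assert (i2 <> i4) by (apply (Hdistinct _ _ _ _ _ _ Hi4 U2 U4); left; discriminate).
  assert (i3 <> i4) by (apply (Hdistinct _ _ _ _ _ _ Hi4 U3 U4); right; discriminate).
  lia.
Qed.

(** * Upper bound *)

Definition step_path m (b1 b2 : bool) (x y : sphere (S m)) (t : R) : sphere (S m) :=
  if Rlt_dec t (1/4) then x
  else if Rle_dec t (1/4) then top m b1
  else if Rlt_dec t (1/2) then bottom m
  else if Rle_dec t (1/2) then top m b2
  else y.

Ltac step_path_cases :=
  unfold step_path;
  repeat match goal with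
  | |- context [Rlt_dec ?a ?b] => destruct (Rlt_dec a b)
  | |- context [Rle_dec ?a ?b] => destruct (Rle_dec a b)
  end;
  first [lra | reflexivity | assumption | exact I | apply sphere_refl].

(* Near each instant, the step path only takes values below its current
   value: near 1/4 (resp. 1/2) it is x or bottom (resp. bottom or y), all
   below top b1 (resp. top b2). *)
Lemma step_path_continuous m b1 b2 (x y : sphere (S m)) :
  x ⊑ top m b1 -> y ⊑ top m b2 -> path_continuous (sphere (S m)) (step_path m b1 b2 x y).
Proof.
  intros Hx Hy. apply (path_continuous_locally_below _ (sphere_refl _) (sphere_trans _)).
  intros t Ht.
  destruct (Rtotal_order t (1/4)) as [h1|[h1|h1]];
    [| |destruct (Rtotal_order t (1/2)) as [h2|[h2|h2]]].
  - exists (1/4 - t); split; [lra|]; intros s Hs Hst; apply Rabs_def2 in Hst; step_path_cases.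
  - exists (1/4); split; [lra|]; intros s Hs Hst; apply Rabs_def2 in Hst; step_path_cases.
  - exists (Rmin (t - 1/4) (1/2 - t)).
    pose proof (Rmin_l (t - 1/4) (1/2 - t)); pose proof (Rmin_r (t - 1/4) (1/2 - t)).
    split; [apply Rmin_glb_lt; lra|]; intros s Hs Hst; apply Rabs_def2 in Hst; step_path_cases.
  - exists (1/4); split; [lra|]; intros s Hs Hst; apply Rabs_def2 in Hst; step_path_cases.
  - exists (t - 1/2); split; [lra|]; intros s Hs Hst; apply Rabs_def2 in Hst; step_path_cases.
Qed.

Definition top_pair_down_set m (b1 b2 : bool) (p : sphere (S m) * sphere (S m)) : Prop :=
  fst p ⊑ top m b1 /\ snd p ⊑ top m b2.

Lemma top_pair_down_set_open m b1 b2 : prod_open (sphere (S m)) (top_pair_down_set m b1 b2).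
Proof.
  intros a b [Ha Hb]. exists (fun x => x ⊑ top m b1), (fun y => y ⊑ top m b2).
  repeat split; try assumption; apply down_set_open, sphere_trans.
Qed.

Lemma top_pair_down_set_section m b1 b2 : has_section (sphere (S m)) (top_pair_down_set m b1 b2).
Proof.
  apply (monotone_paths_section _ (sphere_refl _) (sphere_trans _) _
    (fun p => step_path m b1 b2 (fst p) (snd p))); [apply top_pair_down_set_open | |].
  - intros [x y] [Hx Hy]. split; [apply step_path_continuous; assumption|].
    split; simpl; step_path_cases.
  - intros a b x y t _ Hx Hy. simpl. step_path_cases.
Qed.

Lemma motion_cover_4 m : motion_cover (sphere (S m)) 4.
Proof.
  exists (fun i => top_pair_down_set m (Nat.ltb i 2) (Nat.even i)). split.
  - intros i _. split; [apply top_pair_down_set_open | apply top_pair_down_set_section].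
  - intros [x y]. destruct (below_some_top m x) as [b1 Hx], (below_some_top m y) as [b2 Hy].
    destruct b1, b2; [exists 0%nat | exists 1%nat | exists 2%nat | exists 3%nat];
      split; solve [lia | split; assumption].
Qed.

Theorem corollary7 : forall n : nat, (1 <= n)%nat -> TC_eq (sphere n) 4.
Proof.
  intros [|m] Hn; [lia|].
  split; [apply motion_cover_4 | intros k; apply motion_cover_ge_4].
Qed.
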